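(* Let $\Pi$ be a $3$-decomposable $30$-half-period with classes $A,B,C$. Then $N_k^{bi}(\Pi)=3k$ for $k=1,2,\dots,10$.
   Context: An allowable sequence on an $n$-element set is a doubly infinite sequence of permutations of the set (lists on positions $1,\dots,n$) in which consecutive permutations differ by swapping two adjacent elements (a transposition) and $\pi_{i+\binom n2}$ is the reverse of $\pi_i$; an $n$-half-period is a block $(\pi_0,\dots,\pi_{\binom n2})$ of consecutive permutations (each pair of elements is swapped exactly once in it). A transposition swapping the elements in positions $i,i+1$ is an $i$-transposition; for $1\le k\le n/2$ it is $k$-critical if it is a $k$-transposition or an $(n-k)$-transposition. An $n$-half-period $\Pi$ ($3\mid n$) is $3$-decomposable if its elements can be labeled $A=\{a_1,\dots,a_{n/3}\}$, $B=\{b_1,\dots,b_{n/3}\}$, $C=\{c_1,\dots,c_{n/3}\}$ so that its first permutation is $(a_{n/3},\dots,a_1,b_1,\dots,b_{n/3},c_1,\dots,c_{n/3})$, every transposition between an element of $A$ and an element of $B$ occurs before every transposition between an element of $C$ and an element of $A\cup B$, and every transposition between $A$ and $C$ occurs before every transposition between $B$ and $C$. A transposition is bichromatic if its two elements lie in different classes among $A,B,C$, and monochromatic otherwise. $N_k^{bi}(\Pi)$ is the number of bichromatic $k$-critical transpositions of $\Pi$. *)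

From mathcomp Require Import all_boot all_order all_algebra all_fingroup.
Set Implicit Arguments. Unset Strict Implicit. Unset Printing Implicit Defensive.
Import GRing.Theory Num.Theory.

(* Elements of the n-element set: 'I_n.  Positions: 'I_n, 0-based
   (position j here is position j+1 in the paper).
   A permutation (list) is p : {perm 'I_n}, p j = element at position j. *)

Definition adj_swap n (p q : {perm 'I_n}) (j j' : 'I_n) : bool :=
  (val j' == (val j).+1) && [forall x, q x == p (tperm j j' x)].

Definition allowable n (S : int -> {perm 'I_n}) : Prop :=
  (forall i : int, exists j j' : 'I_n, adj_swap (S i) (S (i + 1)%R) j j') /\
  (forall (i : int) (x : 'I_n), S (i + ('C(n, 2))%:Z)%R x = S i (rev_ord x)).

(* n-half-period: the block (pi_0, ..., pi_(C(n,2))), represented by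
   P : nat -> {perm 'I_n} (only t <= C(n,2) is relevant). *)
Definition half_period n (P : nat -> {perm 'I_n}) : Prop :=
  exists (S : int -> {perm 'I_n}) (i0 : int), allowable S /\
    forall t, t <= 'C(n, 2) -> P t = S (i0 + t%:Z)%R.

Definition swaps_at n (P : nat -> {perm 'I_n}) (t : nat) (j j' x y : 'I_n) :=
  adj_swap (P t) (P t.+1) j j' &&
  (((P t j == x) && (P t j' == y)) || ((P t j == y) && (P t j' == x))).

Definition swaps n (P : nat -> {perm 'I_n}) (t : nat) (x y : 'I_n) : bool :=
  [exists j, exists j', swaps_at P t j j' x y].

Definition three_decomposable n (P : nat -> {perm 'I_n})
    (A B C : {set 'I_n}) : Prop :=
  let m := n %/ 3 in
  3 %| n /\
  exists a b c : 'I_m -> 'I_n,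
    A = [set a i | i in 'I_m] /\ B = [set b i | i in 'I_m] /\
    C = [set c i | i in 'I_m] /\
    (* first permutation (a_m, ..., a_1, b_1, ..., b_m, c_1, ..., c_m);
       labels are 0-based here: a i = a_(i+1) *)
    (forall (i : 'I_m) (pos : 'I_n),
        (val pos = m - 1 - i -> P 0 pos = a i) /\
        (val pos = m + i -> P 0 pos = b i) /\
        (val pos = 2 * m + i -> P 0 pos = c i)) /\
    (forall t1 t2 x y u v, t1 < 'C(n, 2) -> t2 < 'C(n, 2) ->
        swaps P t1 x y -> x \in A -> y \in B ->
        swaps P t2 u v -> u \in C -> v \in A :|: B -> t1 < t2) /\
    (forall t1 t2 x y u v, t1 < 'C(n, 2) -> t2 < 'C(n, 2) ->
        swaps P t1 x y -> x \in A -> y \in C ->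
        swaps P t2 u v -> u \in B -> v \in C -> t1 < t2).

Definition same_class n (A B C : {set 'I_n}) (x y : 'I_n) : bool :=
  [|| (x \in A) && (y \in A), (x \in B) && (y \in B) | (x \in C) && (y \in C)].

(* N_k^bi: number of bichromatic k-critical transpositions (k- or
   (n-k)-transpositions, i.e. swapping positions i,i+1 (1-based) with
   i = k or i = n-k; 0-based: val j' = i). *)
Definition N_bi n (P : nat -> {perm 'I_n}) (A B C : {set 'I_n}) (k : nat) : nat :=
  count (fun t => [exists j, exists j', exists x, exists y,
            [&& swaps_at P t j j' x y,
                (val j' == k) || (val j' == n - k) &
                ~~ same_class A B C x y]])
        (iota 0 'C(n, 2)).

From mathcomp Require Import all_boot all_order all_algebra all_fingroup zify.
Set Implicit Arguments. Unset Strict Implicit. Unset Printing Implicit Defensive.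

(* Each step
   changes the number of pairs standing in the reverse of their initial order by one, and
   the last permutation reverses all C(n,2) pairs in C(n,2) steps; so every step swaps a
   pair that is still in initial order, each pair is swapped exactly once, and a pair is
   reversed at time t iff it was swapped before t.
   In a 3-decomposable half-period the classes are the blocks of m = n/3 consecutive initial
   positions, and the order of the transpositions locates the bichromatic swaps: an AC-swap
   has all of B on its left, hence happens beyond position m, while an AB-swap (BC-swap)
   has all of C (of A) on its right, hence happens before position 2m. So for k <= m the
   bichromatic swaps across the boundary after position k are the AB-swaps, each removing
   an A-element from the first k positions, and the BC-swaps, each bringing a C-element into
   them; those across the boundary after position n-k are the AC-swaps, each removing an
   A-element from the first n-k positions. Comparing these counts in the first permutation
   and in its reverse gives k + k + k. *)

Lemma sum_ord_range n a b : \sum_(q < n) (a <= q < b) = minn b n - a.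
Proof. by elim: n => [|n IHn]; rewrite ?big_ord0 ?big_ord_recr ?IHn /=; lia. Qed.

Lemma card_ltn_pairs n : #|[set uv : 'I_n * 'I_n | uv.1 < uv.2]| = 'C(n, 2).
Proof.
rewrite -sum1_card big_mkcond (eq_bigr (fun uv : 'I_n * 'I_n => (uv.1 < uv.2) : nat)).
  rewrite -(pair_bigA _ (fun u v : 'I_n => (u < v) : nat)) exchange_big /=.
  rewrite -bin2_sum big_mkord; apply: eq_bigr => v _.
  rewrite (eq_bigr (fun u : 'I_n => (0 <= u < v) : nat)) // sum_ord_range.
  by have := ltn_ord v; lia.
by move=> uv _; rewrite inE.
Qed.

Lemma val_tperm n (j j' p : 'I_n) :
  tperm j j' p = (if p == j then j' else if p == j' then j else p) :> nat.
Proof.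
by case: tpermP => [->|->|/eqP/negPf-> /eqP/negPf->]; rewrite ?eqxx //; case: eqP => [->|].
Qed.

Lemma tperm_adj_ltn n (j j' p q : 'I_n) : j' = j.+1 :> nat ->
  (tperm j j' q < tperm j j' p) =
  (if (p == j) && (q == j') then true else if (p == j') && (q == j) then false else q < p).
Proof. by move=> jj'; rewrite !val_tperm -!val_eqE /=; repeat (case: ifP => ? /=); lia. Qed.

Lemma adj_swap_uniq n (p q : {perm 'I_n}) j j' j0 j0' :
  adj_swap p q j j' -> adj_swap p q j0 j0' -> j0 = j /\ j0' = j'.
Proof.
move=> /andP[/eqP jj' /forallP Hj] /andP[/eqP jj0 /forallP Hj0].
have E : tperm j j' j = tperm j0 j0' j.
  by apply: (@perm_inj _ p); rewrite -(eqP (Hj j)) (eqP (Hj0 j)).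
move: E; rewrite tpermL; case: tpermP => [<- -> //|ej ej'|_ _ ej'].
  by move: jj'; rewrite ej ej'; lia.
by move: jj'; rewrite ej'; lia.
Qed.

Lemma same_classC n (A B C : {set 'I_n}) x y : same_class A B C x y = same_class A B C y x.
Proof. by rewrite /same_class andbC [(x \in B) && _]andbC [(x \in C) && _]andbC. Qed.

Lemma swapsC n (P : nat -> {perm 'I_n}) t u v : swaps P t u v = swaps P t v u.
Proof.
by apply/existsP/existsP => -[j /existsP[j' /andP[sw uv]]]; exists j;
  apply/existsP; exists j'; rewrite /swaps_at sw orbC.
Qed.

Section HalfPeriod.
Variables (n : nat) (P : nat -> {perm 'I_n}).

Hypothesis P_step :
  forall t, t < 'C(n, 2) -> exists j j', adj_swap (P t) (P t.+1) j j'.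
Hypothesis P_last : forall z, P 'C(n, 2) z = P 0 (rev_ord z).

Definition pos t : {perm 'I_n} := (P t)^-1%g.

Lemma posK t : cancel (P t) (pos t). Proof. exact: permK. Qed.
Lemma posKV t : cancel (pos t) (P t). Proof. exact: permKV. Qed.

Lemma pos_step t j j' z : adj_swap (P t) (P t.+1) j j' -> pos t.+1 z = tperm j j' (pos t z).
Proof.
move=> /andP[_ /forallP sw]; apply: (@perm_inj _ (P t.+1)).
by rewrite posKV (eqP (sw _)) tpermK posKV.
Qed.

Definition inversions t : {set 'I_n * 'I_n} :=
  [set uv | (pos 0 uv.1 < pos 0 uv.2) && (pos t uv.2 < pos t uv.1)].

Lemma inversions_step t j j' : adj_swap (P t) (P t.+1) j j' ->
  inversions t.+1 = if pos 0 (P t j) < pos 0 (P t j') then (P t j, P t j') |: inversions t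
                    else inversions t :\ (P t j', P t j).
Proof.
move=> sw; have jj' : j' = j.+1 :> nat by case/andP: sw => /eqP.
apply/setP => -[u v]; rewrite -(posKV t u) -(posKV t v); move: (pos t u) (pos t v) => p q.
case: ifP => hxy; rewrite !inE /= !(pos_step _ sw) !posK !xpair_eqE !(inj_eq perm_inj).
all: rewrite tperm_adj_ltn //.
all: case: (boolP ((p == j) && (q == j'))) => [/andP[/eqP-> /eqP->]|_];
  last case: (boolP ((p == j') && (q == j))) => [/andP[/eqP-> /eqP->]|_]; rewrite /=; lia.
Qed.

Lemma pos_last z : pos 'C(n, 2) z = rev_ord (pos 0 z).
Proof.
by apply: (@perm_inj _ (P 'C(n, 2))); rewrite posKV P_last rev_ordK posKV.
Qed.

Lemma card_inversions_step t j j' : adj_swap (P t) (P t.+1) j j' ->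
  #|inversions t.+1| = if pos 0 (P t j) < pos 0 (P t j') then #|inversions t|.+1
                       else #|inversions t|.-1.
Proof.
move=> sw; have jj' : j' = j.+1 :> nat by case/andP: sw => /eqP.
rewrite (inversions_step sw); case: ifP => lt_xy.
  by rewrite cardsU1 inE /= !posK jj' [_.+1 < _]ltnNge leqnSn andbF.
have : pos 0 (P t j') <= pos 0 (P t j) by rewrite leqNgt lt_xy.
rewrite leq_eqVlt => /orP[/eqP/val_inj/perm_inj/perm_inj ej | lt_yx].
  by move: jj'; rewrite ej; lia.
by rewrite (cardsD1 (P t j', P t j) (inversions t)) inE /= !posK lt_yx jj' ltnSn.
Qed.

Lemma card_inversions0 : #|inversions 0| = 0.
Proof. by apply: eq_card0 => uv; rewrite !inE; lia. Qed.

Lemma card_inversions_last : #|inversions 'C(n, 2)| = 'C(n, 2).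
Proof.
have -> : inversions 'C(n, 2) =
          (fun uv => (pos 0 uv.1, pos 0 uv.2)) @^-1: [set uv : 'I_n * 'I_n | uv.1 < uv.2].
  apply/setP => -[u v]; rewrite !inE /= !pos_last /=.
  by have := ltn_ord (pos 0 u); have := ltn_ord (pos 0 v); lia.
by rewrite card_preimset ?card_ltn_pairs // => -[u v] [u' v'] [/perm_inj-> /perm_inj->].
Qed.

Lemma card_inversions_grow t d : t + d <= 'C(n, 2) ->
  #|inversions (t + d)| <= #|inversions t| + d.
Proof.
elim: d => [|d IHd] tdN; first by rewrite !addn0.
have {}tdN : t + d < 'C(n, 2) by lia.
have [j [j' sw]] := P_step tdN.
by rewrite addnS (card_inversions_step sw) addnS; have := IHd (ltnW tdN); case: ifP; lia.
Qed.

Lemma swap_forward t j j' : t < 'C(n, 2) -> adj_swap (P t) (P t.+1) j j' ->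
  pos 0 (P t j) < pos 0 (P t j').
Proof.
move=> tN sw; apply: contraT => backward.
have := card_inversions_step sw; rewrite (negPf backward).
have := card_inversions_grow (t := 0) (d := t); rewrite add0n card_inversions0.
have := card_inversions_grow (t := t.+1) (d := 'C(n, 2) - t.+1).
rewrite subnKC // card_inversions_last; lia.
Qed.

Lemma swapsE t j j' u v : adj_swap (P t) (P t.+1) j j' ->
  swaps P t u v = ((u, v) == (P t j, P t j')) || ((u, v) == (P t j', P t j)).
Proof.
move=> sw; rewrite !xpair_eqE; apply/existsP/idP => [[j0 /existsP[j0' /andP[sw0]]]|uv].
  have [-> ->] := adj_swap_uniq sw sw0.
  by case/orP => /andP[/eqP<- /eqP<-]; rewrite !eqxx ?orbT.
exists j; apply/existsP; exists j'.
by case/orP: uv => /andP[/eqP-> /eqP->]; rewrite /swaps_at sw !eqxx ?orbT.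
Qed.

Lemma mem_inversions t u v : t <= 'C(n, 2) -> pos 0 u < pos 0 v ->
  (u, v) \in inversions t <-> exists2 s, s < t & swaps P s u v.
Proof.
move=> + huv; elim: t => [_|t IHt tN].
  by rewrite inE /=; split=> [|[]] //; lia.
have [j [j' sw]] := P_step tN.
rewrite (inversions_step sw) (swap_forward tN sw) in_setU1.
split=> [/orP[uv|/(IHt (ltnW tN))[s st sw_s]]|[s]].
- by exists t => //; rewrite (swapsE _ _ sw) uv.
- by exists s => //; apply: ltnW.
rewrite ltnS leq_eqVlt => /orP[/eqP-> | st] sw_s.
  apply/orP; left; move: sw_s; rewrite (swapsE _ _ sw) => /orP[//|/eqP[eu ev]].
  by move: huv (swap_forward tN sw); rewrite eu ev; lia.
by apply/orP; right; apply/(IHt (ltnW tN)); exists s.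
Qed.

Lemma exists_swap u v : pos 0 u < pos 0 v -> exists2 s, s < 'C(n, 2) & swaps P s u v.
Proof.
move=> huv; apply/(mem_inversions (leqnn _) huv).
by rewrite inE /= !pos_last /= huv; have := ltn_ord (pos 0 v); lia.
Qed.

Lemma sum_pos_range t a b : \sum_z (a <= pos t z < b) = minn b n - a.
Proof.
rewrite (reindex_inj (@perm_inj _ (P t))) -sum_ord_range.
by apply: eq_bigr => z _; rewrite posK.
Qed.

Lemma leq_block_window t lo l a b : lo + l <= n -> b <= n ->
  (forall z, lo <= pos 0 z < lo + l -> a <= pos t z < b) -> l <= b - a.
Proof.
move=> ln bn window; have := sum_pos_range 0 lo (lo + l); have := sum_pos_range t a b.
have : \sum_z (lo <= pos 0 z < lo + l) <= \sum_z (a <= pos t z < b).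
  by apply: leq_sum => z _; have := window z; lia.
lia.
Qed.

Definition prefix_count t k (S : {set 'I_n}) : nat := \sum_z ((z \in S) && (pos t z < k)).

Lemma prefix_count_step t j j' k S : adj_swap (P t) (P t.+1) j j' ->
  prefix_count t.+1 k S + ((j' == k :> nat) && (P t j \in S)) =
  prefix_count t k S + ((j' == k :> nat) && (P t j' \in S)).
Proof.
move=> sw; have jj' : j' = j.+1 :> nat by case/andP: sw => /eqP.
have yx : P t j' != P t j by rewrite (inj_eq perm_inj); apply/eqP => e; move: jj'; rewrite e; lia.
have split_xy (F : 'I_n -> nat) :
    \sum_z F z = F (P t j) + F (P t j') + \sum_(z | (z != P t j) && (z != P t j')) F z.
  by rewrite (bigD1 (P t j)) // (bigD1 (P t j')) //= addnA.
rewrite /prefix_count !split_xy !(pos_step _ sw) !posK tpermL tpermR.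
rewrite (eq_bigr (fun z => ((z \in S) && (pos t z < k)) : nat)) => [|z /andP[zx zy]]; first lia.
by rewrite (pos_step _ sw) tpermD //; [move: zx | move: zy]; apply: contra_neq => ->; rewrite posKV.
Qed.

Lemma prefix_count_window t k (S : {set 'I_n}) a b : b <= n ->
  (forall z, (z \in S) && (pos t z < k) = (a <= pos 0 z < b)) -> prefix_count t k S = b - a.
Proof.
move=> bn window; rewrite /prefix_count (eq_bigr (fun z => (a <= pos 0 z < b) : nat)).
  by rewrite sum_pos_range; lia.
by move=> z _; rewrite window.
Qed.

Lemma prefix_count_last_window k (S : {set 'I_n}) a b : b <= n ->
  (forall z, (z \in S) && (n - (pos 0 z).+1 < k) = (a <= pos 0 z < b)) ->
  prefix_count 'C(n, 2) k S = b - a.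
Proof. by move=> bn window; apply: prefix_count_window => // z; rewrite pos_last. Qed.

Lemma mem_initial_block l (F : 'I_l -> 'I_n) (e : nat -> nat) lo : lo + l <= n ->
  (forall (i : 'I_l) (p : 'I_n), val p = e i -> P 0 p = F i) ->
  (forall i : 'I_l, lo <= e i < lo + l) ->
  (forall q, lo <= q < lo + l -> exists i : 'I_l, e i = q) ->
  forall z, (z \in [set F i | i in 'I_l]) = (lo <= pos 0 z < lo + l).
Proof.
move=> ln initF e_range e_onto z; apply/imsetP/idP => [[i _ ->]|hz].
  have ei : e i < n by have := e_range i; lia.
  by rewrite -(initF i (Ordinal ei)) // posK; exact: e_range.
have [i ei] := e_onto _ hz; exists i => //.
by rewrite -(initF i (pos 0 z)) ?posKV.
Qed.

End HalfPeriod.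

Lemma half_periodP n (P : nat -> {perm 'I_n}) : half_period P ->
  (forall t, t < 'C(n, 2) -> exists j j', adj_swap (P t) (P t.+1) j j') /\
  (forall z, P 'C(n, 2) z = P 0 (rev_ord z)).
Proof.
case=> S [i0 [[S_step S_rev] PS]]; split=> [t tN | z].
  rewrite !PS ?(ltnW tN) //.
  have -> : (i0 + t.+1%:Z = i0 + t%:Z + 1)%R by rewrite -GRing.addrA -PoszD addn1.
  exact: S_step.
by rewrite !PS // GRing.addr0 S_rev.
Qed.

Section ThreeDecomposable.
Variables (n m : nat) (P : nat -> {perm 'I_n}) (A B C : {set 'I_n}).
Hypothesis n_eq : n = 3 * m.
Hypothesis P_step :
  forall t, t < 'C(n, 2) -> exists j j', adj_swap (P t) (P t.+1) j j'.
Hypothesis P_last : forall z, P 'C(n, 2) z = P 0 (rev_ord z).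
Local Notation pos := (pos P).
Hypothesis A_init : forall z, (z \in A) = (pos 0 z < m).
Hypothesis B_init : forall z, (z \in B) = (m <= pos 0 z < 2 * m).
Hypothesis C_init : forall z, (z \in C) = (2 * m <= pos 0 z).
Hypothesis AB_before_C : forall t1 t2 x y u v, t1 < 'C(n, 2) -> t2 < 'C(n, 2) ->
  swaps P t1 x y -> x \in A -> y \in B ->
  swaps P t2 u v -> u \in C -> v \in A :|: B -> t1 < t2.
Hypothesis AC_before_BC : forall t1 t2 x y u v, t1 < 'C(n, 2) -> t2 < 'C(n, 2) ->
  swaps P t1 x y -> x \in A -> y \in C ->
  swaps P t2 u v -> u \in B -> v \in C -> t1 < t2.

Section Step.
Variables (t : nat) (j j' : 'I_n).
Hypotheses (tN : t < 'C(n, 2)) (sw : adj_swap (P t) (P t.+1) j j').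
Local Notation x := (P t j).
Local Notation y := (P t j').

Lemma AC_swap_position : x \in A -> y \in C -> m <= j.
Proof.
move=> xA yC; suff : m <= j - 0 by lia.
apply: (@leq_block_window n P t m) => [||b hb]; [lia | by have := ltn_ord j; lia |].
have hxb : pos 0 x < pos 0 b by move: xA; rewrite A_init; lia.
have [s sN sw_s] := exists_swap P_step P_last hxb.
have st : s < t.
  apply: (AB_before_C sN tN sw_s xA _ (_ : swaps P t y x) yC (_ : x \in A :|: B)).
  - by rewrite B_init; lia.
  - by rewrite (swapsE _ _ sw) eqxx orbT.
  - by rewrite inE xA.
have := (mem_inversions P_step P_last (ltnW tN) hxb).2 (ex_intro2 _ _ s st sw_s).
by rewrite inE /= posK; lia.
Qed.

Lemma AB_swap_position : x \in A -> y \in B -> j' < 2 * m.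
Proof.
move=> xA yB; suff : m <= n - j'.+1 by have := ltn_ord j'; lia.
apply: (@leq_block_window n P t (2 * m)) => [||c hc]; [lia | by [] |].
rewrite ltn_ord andbT ltnNge; apply/negP => cj.
have hyc : pos 0 y < pos 0 c by move: yB; rewrite B_init; lia.
have : (y, c) \in inversions P t.
  rewrite inE /= hyc posK ltn_neqAle cj andbT.
  by apply/eqP => /val_inj ecj; move: hyc; rewrite -ecj posKV ltnn.
case/(mem_inversions P_step P_last (ltnW tN) hyc) => s st sw_s.
have sN : s < 'C(n, 2) by apply: ltn_trans tN.
have ts : t < s.
  apply: (AB_before_C tN sN (_ : swaps P t x y) xA yB (_ : swaps P s c y) (_ : c \in C)
    (_ : y \in A :|: B)).
  - by rewrite (swapsE _ _ sw) eqxx.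
  - by rewrite swapsC.
  - by rewrite C_init; lia.
  - by rewrite inE yB orbT.
by move: ts; rewrite ltnNge ltnW.
Qed.

Lemma BC_swap_position : x \in B -> y \in C -> j' < 2 * m.
Proof.
move=> xB yC; suff : m <= n - j'.+1 by have := ltn_ord j'; lia.
apply: (@leq_block_window n P t 0) => [||a ha]; [lia | by [] |].
have hay : pos 0 a < pos 0 y by move: yC; rewrite C_init; lia.
have aA : a \in A by rewrite A_init; lia.
have [s sN sw_s] := exists_swap P_step P_last hay.
have st : s < t.
  by apply: (AC_before_BC sN tN sw_s aA yC _ xB yC); rewrite (swapsE _ _ sw) eqxx.
have := (mem_inversions P_step P_last (ltnW tN) hay).2 (ex_intro2 _ _ s st sw_s).
by rewrite inE /= posK ltn_ord andbT; lia.
Qed.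

Lemma bichromatic_at_k k : j' = k :> nat -> k <= m ->
  ~~ same_class A B C x y + (y \in A) + (x \in C) = (x \in A) + (y \in C).
Proof.
move=> jk km; have jj' : j' = j.+1 :> nat by case/andP: sw => /eqP.
have fw := swap_forward P_step P_last tN sw; have := AC_swap_position.
by rewrite /same_class !A_init !B_init !C_init; lia.
Qed.

Lemma bichromatic_at_nk k : j' = n - k :> nat -> 1 <= k <= m ->
  ~~ same_class A B C x y + (y \in A) = (x \in A).
Proof.
move=> jk km; have fw := swap_forward P_step P_last tN sw.
have := AB_swap_position; have := BC_swap_position.
by rewrite /same_class !A_init !B_init !C_init; lia.
Qed.

End Step.

Definition bichromatic_swap k t : bool :=
  [exists j, exists j', exists x, exists y,
     [&& swaps_at P t j j' x y, (val j' == k) || (val j' == n - k) & ~~ same_class A B C x y]].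

Lemma bichromatic_swapE k t j j' : adj_swap (P t) (P t.+1) j j' ->
  bichromatic_swap k t =
  ((j' == k :> nat) || (j' == n - k :> nat)) && ~~ same_class A B C (P t j) (P t j').
Proof.
move=> sw; apply/existsP/andP => [[j0 /existsP[j0' /existsP[u /existsP[v]]]]|[crit bi]].
  case/and3P => /andP[sw0 uv] crit bi; have [e0 e0'] := adj_swap_uniq sw sw0; subst j0 j0'.
  by split=> //; case/orP: uv => /andP[/eqP-> /eqP->]; rewrite // same_classC.
exists j; apply/existsP; exists j'; apply/existsP; exists (P t j); apply/existsP; exists (P t j').
by rewrite /swaps_at sw !eqxx crit bi.
Qed.

Lemma bichromatic_swap_step k t : 1 <= k <= m -> t < 'C(n, 2) ->
  bichromatic_swap k t + prefix_count P t.+1 k A + prefix_count P t.+1 (n - k) A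
    + prefix_count P t k C =
  prefix_count P t k A + prefix_count P t (n - k) A + prefix_count P t.+1 k C.
Proof.
move=> km tN; have [j [j' sw]] := P_step tN.
have := prefix_count_step k A sw; have := prefix_count_step (n - k) A sw.
have := prefix_count_step k C sw.
have := bichromatic_at_k (k := k) tN sw; have := bichromatic_at_nk (k := k) tN sw.
rewrite (bichromatic_swapE k sw).
(* The memberships below occur in convertible but syntactically different forms. *)
move: (P t j \in A) (P t j' \in A) (P t j \in C) (P t j' \in C) => xA yA xC yC.
lia.
Qed.

Lemma count_bichromatic_swaps k T : 1 <= k <= m -> T <= 'C(n, 2) ->
  count (bichromatic_swap k) (iota 0 T) + prefix_count P T k A + prefix_count P T (n - k) A
    + prefix_count P 0 k C =
  prefix_count P 0 k A + prefix_count P 0 (n - k) A + prefix_count P T k C.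
Proof.
move=> km; elim: T => [_|T IHT TN]; first by rewrite /=; lia.
have -> : iota 0 T.+1 = iota 0 T ++ [:: T] by rewrite -addn1 iotaD.
rewrite count_cat /=; have := IHT (ltnW TN); have := bichromatic_swap_step km TN; lia.
Qed.

Lemma N_bi_three_blocks k : 1 <= k <= m -> N_bi P A B C k = 3 * k.
Proof.
move=> km; have := count_bichromatic_swaps km (leqnn _).
have -> : prefix_count P 0 k A = k - 0.
  by apply: prefix_count_window => [|z]; rewrite ?A_init; lia.
have -> : prefix_count P 0 (n - k) A = m - 0.
  by apply: prefix_count_window => [|z]; rewrite ?A_init; lia.
have -> : prefix_count P 0 k C = 0 - 0.
  by apply: prefix_count_window => [|z]; rewrite ?C_init; lia.
have -> : prefix_count P 'C(n, 2) k A = 0 - 0.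
  apply: (prefix_count_last_window P_last) => [|z]; first lia.
  by rewrite A_init; have := ltn_ord (pos 0 z); lia.
have -> : prefix_count P 'C(n, 2) (n - k) A = m - k.
  apply: (prefix_count_last_window P_last) => [|z]; first lia.
  by rewrite A_init; have := ltn_ord (pos 0 z); lia.
have -> : prefix_count P 'C(n, 2) k C = n - (n - k).
  apply: (prefix_count_last_window P_last) => [|z]; first lia.
  by rewrite C_init; have := ltn_ord (pos 0 z); lia.
rewrite /N_bi -/(bichromatic_swap k); lia.
Qed.

End ThreeDecomposable.

Lemma three_decomposable_blocks n (P : nat -> {perm 'I_n}) (A B C : {set 'I_n}) :
  three_decomposable P A B C ->
  let m := n %/ 3 in
  [/\ n = 3 * m, forall z, (z \in A) = (pos P 0 z < m),
      forall z, (z \in B) = (m <= pos P 0 z < 2 * m)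
    & forall z, (z \in C) = (2 * m <= pos P 0 z)].
Proof.
case=> /divnK n3 [a [b [c [-> [-> [-> [init _]]]]]]] m; rewrite -/m in n3 init.
have n_eq : n = 3 * m by rewrite mulnC n3.
split=> // z.
- rewrite (mem_initial_block (lo := 0) _ (fun i p => (init i p).1));
    [by [] | lia | move=> i; have := ltn_ord i; lia | move=> q qm].
  have lt : m - 1 - q < m by lia.
  by exists (Ordinal lt) => /=; lia.
- rewrite (mem_initial_block (lo := m) _ (fun i p => (init i p).2.1));
    [lia | lia | move=> i; have := ltn_ord i; lia | move=> q qm].
  have lt : q - m < m by lia.
  by exists (Ordinal lt) => /=; lia.
- rewrite (mem_initial_block (lo := 2 * m) _ (fun i p => (init i p).2.2));
    [by have := ltn_ord (pos P 0 z); lia | lia | move=> i; have := ltn_ord i; lia | move=> q qm].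
  have lt : q - 2 * m < m by lia.
  by exists (Ordinal lt) => /=; lia.
Qed.

Theorem N_bi_three_decomposable n (P : nat -> {perm 'I_n}) (A B C : {set 'I_n}) k :
  half_period P -> three_decomposable P A B C -> 1 <= k <= n %/ 3 -> N_bi P A B C k = 3 * k.
Proof.
move=> /half_periodP[P_step P_last] dec km.
have [n_eq A_init B_init C_init] := three_decomposable_blocks dec.
case: dec => _ [a [b [c [_ [_ [_ [_ [AB_before_C AC_before_BC]]]]]]]].
exact: (N_bi_three_blocks n_eq P_step P_last A_init B_init C_init AB_before_C AC_before_BC).
Qed.

Theorem corollary1 (P : nat -> {perm 'I_30}) (A B C : {set 'I_30}) :
  half_period P -> three_decomposable P A B C ->
  forall k : nat, 1 <= k <= 10 -> N_bi P A B C k = 3 * k.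
Proof. by move=> hp dec k; exact: N_bi_three_decomposable hp dec. Qed.
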